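(* Let $\Delta$ be a regular simplex and $X$ a compact metric space. Then (1) $d_{\mathrm{GH}}(X,\Delta)\le 2\,\widehat{d}_{\mathrm{GH}}(X,\Delta)$, and this bound is tight: for every $c<2$ there exist a compact metric space $X$ and a regular simplex $\Delta$ with $d_{\mathrm{GH}}(X,\Delta)>c\,\widehat{d}_{\mathrm{GH}}(X,\Delta)$; (2) $d_{\mathrm{GH}}(X,\Delta)=\widehat{d}_{\mathrm{GH}}(X,\Delta)$ whenever $|X|<|\Delta|$, or $|X|=|\Delta|<\infty$, or $\operatorname{diam}(\Delta)\le\frac12\operatorname{diam}(X)$.
   Context: A regular simplex is a metric space all of whose distances between distinct points are equal (here finite, so compact). $\operatorname{diam}(X)=\sup_{x,x'}d_X(x,x')$ and $|X|$ is the cardinality. For a map $f:X\to Y$, $\operatorname{dis}(f)=\sup_{x,x'\in X}|d_X(x,x')-d_Y(f(x),f(x'))|$; for $f:X\to Y$, $g:Y\to X$, $\operatorname{codis}(f,g)=\sup_{x\in X,y\in Y}|d_X(x,g(y))-d_Y(f(x),y)|$. $d_{\mathrm{GH}}$ is the Gromov--Hausdorff distance between compact metric spaces (infimum over metric spaces $Z$ and isometric embeddings of $X,Y$ into $Z$ of the Hausdorff distance of the images), equivalently $d_{\mathrm{GH}}(X,Y)=\frac12\inf_{f,g}\max\{\operatorname{dis}(f),\operatorname{dis}(g),\operatorname{codis}(f,g)\}$. The modified Gromov--Hausdorff distance is $\widehat{d}_{\mathrm{GH}}(X,Y)=\frac12\max\{\inf_{f:X\to Y}\operatorname{dis}(f),\inf_{g:Y\to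 X}\operatorname{dis}(g)\}$. *)

From HB Require Import structures.
From mathcomp Require Import all_boot all_order all_algebra.
From mathcomp Require Import boolp classical_sets cardinality reals ereal.
Set Implicit Arguments. Unset Strict Implicit. Unset Printing Implicit Defensive.
Import Order.TTheory GRing.Theory Num.Theory.
Local Open Scope classical_set_scope.
Local Open Scope ring_scope.

Record metric (R : realType) (T : Type) := Metric {
  dist :> T -> T -> R;
  dist_eq0 : forall x y, dist x y = 0 <-> x = y;
  dist_sym : forall x y, dist x y = dist y x;
  dist_tri : forall x y z, dist x z <= dist x y + dist y z;
}.

Section Defs.
Variable R : realType.
Local Open Scope ereal_scope.

Definition mopen T (d : metric R T) (U : set T) :=
  forall x, U x -> exists2 e : R, (0 < e)%R & forall y, (d x y < e)%R -> U y.

Definition compact_metric T (d : metric R T) :=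
  forall (I : Type) (U : I -> set T),
    (forall i, mopen d (U i)) -> (forall x, exists i, U i x) ->
    exists (n : nat) (k : 'I_n -> I), forall x, exists j, U (k j) x.

Definition regular_simplex T (d : metric R T) :=
  exists a : R, forall x y, x <> y -> d x y = a.

Definition diam T (d : metric R T) : \bar R :=
  ereal_sup [set (d x y)%:E | x in [set: T] & y in [set: T]].

Definition dis T S (dT : metric R T) (dS : metric R S) (f : T -> S) : \bar R :=
  ereal_sup [set (`|dT x x' - dS (f x) (f x')|)%:E | x in [set: T] & x' in [set: T]].

Definition codis T S (dT : metric R T) (dS : metric R S) (f : T -> S) (g : S -> T)
  : \bar R :=
  ereal_sup [set (`|dT x (g y) - dS (f x) y|)%:E | x in [set: T] & y in [set: S]].

(* Gromov--Hausdorff distance via the distortion/codistortion formula *)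
Definition dGH T S (dT : metric R T) (dS : metric R S) : \bar R :=
  (2^-1)%:E * ereal_inf [set maxe (maxe (dis dT dS fg.1) (dis dS dT fg.2))
                                  (codis dT dS fg.1 fg.2)
                        | fg in [set: (T -> S) * (S -> T)]].

Definition mdGH T S (dT : metric R T) (dS : metric R S) : \bar R :=
  (2^-1)%:E * maxe (ereal_inf [set dis dT dS f | f in [set: T -> S]])
                   (ereal_inf [set dis dS dT g | g in [set: S -> T]]).
End Defs.

(* Let the simplex Δ have side a.  A map f : X -> Δ of distortion δ has a
   partner g : Δ -> X (a preimage of every point f hits, a fixed point of X
   elsewhere) with dis g <= δ and codis (f, g) <= δ as soon as f is onto or
   a <= δ.  If f misses a point, then for any g : Δ -> X of distortion δ the
   self-map f \o g of the finite set Δ is not injective and has distortion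
   at most 2δ, which forces a <= 2δ: this is the factor 2.  Under each
   hypothesis of (2) the partner costs nothing: if |X| < |Δ| no g is
   injective, so a <= dis g; if |X| = |Δ| an injective g is a bijection whose
   inverse works; if diam Δ <= diam X / 2, a missed point forces a <= δ.
   For tightness, the path {0, ..., N} and two points at distance 2N have
   one-sided distortions at most N, while every pair (f, g) costs at least 2N - 1. *)

From Pilot Require Import Defs.
From HB Require Import structures.
From mathcomp Require Import all_boot all_order all_algebra.
From mathcomp Require Import boolp classical_sets cardinality reals ereal.
From mathcomp Require Import lra ring.
Import Order.TTheory GRing.Theory Num.Theory.
Set Implicit Arguments. Unset Strict Implicit. Unset Printing Implicit Defensive.
Local Open Scope classical_set_scope.
Local Open Scope ring_scope.

Section GromovHausdorff.
Variable R : realType.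

Lemma distxx T (d : metric R T) x : d x x = 0.
Proof. exact/dist_eq0. Qed.

Lemma dist_ge0 T (d : metric R T) x y : 0 <= d x y.
Proof. by have := dist_tri d x y x; rewrite (dist_sym d y x) distxx; lra. Qed.

Definition gh_inf T S (dT : metric R T) (dS : metric R S) : \bar R :=
  ereal_inf [set maxe (maxe (dis dT dS fg.1) (dis dS dT fg.2))
                      (codis dT dS fg.1 fg.2)
            | fg in [set: (T -> S) * (S -> T)]].

Definition dis_inf T S (dT : metric R T) (dS : metric R S) : \bar R :=
  ereal_inf [set dis dT dS f | f in [set: T -> S]].

Lemma dGHE T S (dT : metric R T) (dS : metric R S) :
  dGH dT dS = ((2^-1)%:E * gh_inf dT dS)%E.
Proof. by []. Qed.

Lemma mdGHE T S (dT : metric R T) (dS : metric R S) :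
  mdGH dT dS = ((2^-1)%:E * maxe (dis_inf dT dS) (dis_inf dS dT))%E.
Proof. by []. Qed.

Section Distortion.
Context {T S : Type} {dT : metric R T} {dS : metric R S}.

Lemma dis_ge f x x' : (`|dT x x' - dS (f x) (f x')|%:E <= dis dT dS f)%E.
Proof. by apply: ereal_sup_ubound; exists x => //; exists x'. Qed.

Lemma dis_leP f (δ : R) :
  (dis dT dS f <= δ%:E)%E <-> forall x x', `|dT x x' - dS (f x) (f x')| <= δ.
Proof.
split=> [fδ x x'|fδ]; first by rewrite -lee_fin (le_trans (dis_ge f x x')).
by apply: ge_ereal_sup => _ [x _ [x' _ <-]]; rewrite lee_fin.
Qed.

Lemma codis_ge f g x y : (`|dT x (g y) - dS (f x) y|%:E <= codis dT dS f g)%E.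
Proof. by apply: ereal_sup_ubound; exists x => //; exists y. Qed.

Lemma codis_leP f g (δ : R) :
  (codis dT dS f g <= δ%:E)%E <-> forall x y, `|dT x (g y) - dS (f x) y| <= δ.
Proof.
split=> [fgδ x y|fgδ]; first by rewrite -lee_fin (le_trans (codis_ge f g x y)).
by apply: ge_ereal_sup => _ [x _ [y _ <-]]; rewrite lee_fin.
Qed.

Lemma dis_ge0 f : inhabited T -> (0 <= dis dT dS f)%E.
Proof. by case=> x; apply: le_trans (dis_ge f x x); rewrite !distxx subrr normr0. Qed.

Lemma dis_inf_ge0 : inhabited T -> (0 <= dis_inf dT dS)%E.
Proof. by move=> iT; apply: le_ereal_inf_tmp => _ [f _ <-]; exact: dis_ge0. Qed.

Lemma dis_inf_lt (δ : R) :
  (dis_inf dT dS < δ%:E)%E -> exists f, (dis dT dS f <= δ%:E)%E.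
Proof. by move/ereal_inf_lt => [_ [f _ <-] /ltW]; exists f. Qed.

Lemma gh_inf_le f g (δ : R) :
  (dis dT dS f <= δ%:E)%E -> (dis dS dT g <= δ%:E)%E ->
  (codis dT dS f g <= δ%:E)%E -> (gh_inf dT dS <= δ%:E)%E.
Proof.
move=> fδ gδ fgδ; apply: le_trans (ereal_inf_lbound _) _; first by exists (f, g).
by rewrite /= !ge_max fδ gδ fgδ.
Qed.

Lemma max_dis_inf_le_gh_inf :
  (maxe (dis_inf dT dS) (dis_inf dS dT) <= gh_inf dT dS)%E.
Proof.
apply: le_ereal_inf_tmp => _ [[f g] _ <-] /=.
have fI : (dis_inf dT dS <= dis dT dS f)%E by apply: ereal_inf_lbound; exists f.
have gI : (dis_inf dS dT <= dis dS dT g)%E by apply: ereal_inf_lbound; exists g.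
by rewrite ge_max !le_max fI gI orbT.
Qed.

End Distortion.

Lemma dis_comp T S U (dT : metric R T) (dS : metric R S) (dU : metric R U)
    f g (δ ε : R) :
  (dis dT dS f <= δ%:E)%E -> (dis dS dU g <= ε%:E)%E ->
  (dis dT dU (g \o f) <= (δ + ε)%:E)%E.
Proof.
move=> /dis_leP fδ /dis_leP gε; apply/dis_leP => x x'.
by apply: le_trans (ler_distD (dS (f x) (f x')) _ _) _; exact: lerD.
Qed.

Lemma dis_codis_inverse T S (dT : metric R T) (dS : metric R S) g h (δ : R) :
  cancel g h -> cancel h g -> (dis dS dT g <= δ%:E)%E ->
  (dis dT dS h <= δ%:E)%E /\ (codis dT dS h g <= δ%:E)%E.
Proof.
move=> gK hK /dis_leP gδ; split.
  by apply/dis_leP => x x'; rewrite -{1}(hK x) -{1}(hK x') distrC.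
by apply/codis_leP => x s; rewrite -{1}(hK x) distrC.
Qed.

Lemma lee_pmul_of_gt (x y : \bar R) (k : R) : 0 < k -> (0 <= x)%E ->
  (forall δ : R, (x < δ%:E)%E -> (y <= (k * δ)%:E)%E) -> (y <= k%:E * x)%E.
Proof.
move=> k_gt0; case: x => [x| |] x_ge0 yle //.
  apply/lee_addgt0Pr => e e_gt0; rewrite -EFinM -EFinD.
  have -> : k * x + e = k * (x + e / k) by field; rewrite gt_eqF.
  by apply: yle; rewrite lte_fin ltrDl divr_gt0.
by rewrite mulry gtr0_sg // mul1e leey.
Qed.

Section Simplex.
Context {T S : Type} {dT : metric R T} {dS : metric R S} {a : R}.
Hypothesis side : forall p q : S, p <> q -> dS p q = a.

Lemma simplex_dist_le p q : 0 <= a -> dS p q <= a.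
Proof. by have [->|pq] := pselect (p = q); [rewrite distxx | rewrite side]. Qed.

Lemma simplex_side_le_dis g (δ : R) :
  (dis dS dT g <= δ%:E)%E -> ~ injective g -> a <= δ.
Proof.
move=> /dis_leP gδ /existsNP[s /existsNP[s' /not_implyP[gss' ss']]].
by have := gδ s s'; rewrite gss' distxx subr0 side //; apply: le_trans; exact: ler_norm.
Qed.

Lemma gh_inf_le_of_completion f (δ : R) : inhabited T ->
  (dis dT dS f <= δ%:E)%E -> (forall s, exists x, f x = s) \/ a <= δ ->
  (gh_inf dT dS <= δ%:E)%E.
Proof.
move=> [x0] fδ hit; have /dis_leP fδ' := fδ.
pose g s := if pselect (exists x, f x = s) is left e then proj1_sig (cid e) else x0.
have gP s : f (g s) = s \/ [/\ forall x, f x <> s, g s = x0 & a <= δ].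
  rewrite /g; case: pselect => [e|ne]; first by left; exact: proj2_sig (cid e).
  right; split=> // [x fx|]; first by apply: ne; exists x.
  by case: hit => // surj; case: ne; exact: surj.
have g_codis y s : `|dT y (g s) - dS (f y) s| <= δ.
  have [fgs|[s_out -> a_le]] := gP s; first by rewrite -{2}fgs.
  have fys : dS (f y) s = a := side (s_out y).
  have a_ge0 : 0 <= a by rewrite -fys dist_ge0.
  have := fδ' y x0; have := dist_ge0 dT y x0.
  have := simplex_dist_le (f y) (f x0) a_ge0.
  rewrite fys !ler_norml => fyx0_le yx0_ge0 /andP[lo hi].
  by apply/andP; split; lra.
apply: (gh_inf_le fδ _ (proj2 (codis_leP f g δ) g_codis)); apply/dis_leP => s s'.
have [fgs|[s_out gs a_le]] := gP s; first by rewrite distrC -{2}fgs.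
have [fgs'|[s'_out gs' _]] := gP s'.
  by rewrite distrC (dist_sym dT) (dist_sym dS) -{2}fgs'.
rewrite gs gs' distxx subr0 ger0_norm ?dist_ge0 //.
have [->|ss'] := pselect (s = s'); last by rewrite side.
by rewrite distxx (le_trans _ (fδ' x0 x0)).
Qed.

Lemma simplex_side_le_of_diam f (δ : R) : inhabited T ->
  (diam dS <= (2^-1)%:E * diam dT)%E -> (dis dT dS f <= δ%:E)%E ->
  ~ (forall s, exists x, f x = s) -> a <= δ.
Proof.
move=> [x0] hdiam /dis_leP fδ /existsNP[s /forallNP s_out].
have fs : dS (f x0) s = a := side (s_out x0).
have a_ge0 : 0 <= a by rewrite -fs dist_ge0.
have a_le_diamS : (a%:E <= diam dS)%E.
  by apply: ereal_sup_ubound; exists (f x0) => //; exists s => //; rewrite fs.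
have diamT_le : (diam dT <= (a + δ)%:E)%E.
  apply: ge_ereal_sup => _ [x _ [y _ <-]]; rewrite lee_fin.
  have := fδ x y; have := simplex_dist_le (f x) (f y) a_ge0.
  by rewrite ler_norml => fxy_le /andP[_ hi]; lra.
have half_ge0 : (0 <= (2^-1 : R)%:E)%E by rewrite lee_fin invr_ge0 ler0n.
have := le_trans a_le_diamS (le_trans hdiam (lee_wpmul2l half_ge0 diamT_le)).
by rewrite -EFinM lee_fin; lra.
Qed.

End Simplex.

Lemma gh_inf_le_2max T (dT : metric R T) (S : finType) (dS : metric R S) :
  inhabited T -> regular_simplex dS ->
  (gh_inf dT dS <= 2%:E * maxe (dis_inf dT dS) (dis_inf dS dT))%E.
Proof.
move=> iT [a side]; apply: lee_pmul_of_gt => //; first by rewrite le_max dis_inf_ge0.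
move=> δ; rewrite gt_max => /andP[/dis_inf_lt[f fδ] /dis_inf_lt[g gδ]].
have δ_ge0 : 0 <= δ by rewrite -lee_fin; exact: le_trans (dis_ge0 f iT) fδ.
have f2δ : (dis dT dS f <= (2 * δ)%:E)%E by apply: le_trans fδ _; rewrite lee_fin; lra.
apply: (gh_inf_le_of_completion side iT f2δ).
have [fg_inj|fg_ninj] := pselect (injective (f \o g)).
  by left=> s; have [h _ hK] := injF_bij fg_inj; exists (g (h s)); exact: hK.
by right; have := simplex_side_le_dis side (dis_comp gδ fδ) fg_ninj; lra.
Qed.

Lemma dGH_le_2mdGH T (dT : metric R T) (S : finType) (dS : metric R S) :
  inhabited T -> regular_simplex dS -> (dGH dT dS <= 2%:E * mdGH dT dS)%E.
Proof.
move=> iT sS; rewrite dGHE mdGHE muleCA; apply: lee_wpmul2l.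
  by rewrite lee_fin invr_ge0 ler0n.
exact: gh_inf_le_2max.
Qed.

Lemma gh_inf_eq_max T S (dT : metric R T) (dS : metric R S) : inhabited T ->
  (forall f g (δ : R), (dis dT dS f <= δ%:E)%E -> (dis dS dT g <= δ%:E)%E ->
     (gh_inf dT dS <= δ%:E)%E) ->
  gh_inf dT dS = maxe (dis_inf dT dS) (dis_inf dS dT).
Proof.
move=> iT le_δ; apply/le_anti; rewrite max_dis_inf_le_gh_inf andbT.
rewrite -[X in (_ <= X)%E]mul1e; apply: lee_pmul_of_gt => //.
  by rewrite le_max dis_inf_ge0.
move=> δ; rewrite gt_max mul1r => /andP[/dis_inf_lt[f fδ] /dis_inf_lt[g gδ]].
exact: le_δ fδ gδ.
Qed.

Lemma card_eq_inj T U (A : set U) :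
  ([set: T] #= A)%card -> exists2 F : T -> U, injective F & forall t, A (F t).
Proof.
move/card_bijP => [f [h fK hK]].
exists (fun t => val (f (SigSub (mem_set (I : [set: T] t))))).
  by move=> t t' /val_inj /(congr1 h); rewrite !fK => /(congr1 val).
by move=> t; apply: set_mem; exact: valP.
Qed.

Lemma card_lt_not_injective T (S : finType) n (g : S -> T) :
  (n < #|S|)%N -> ([set: T] #= `I_n)%card -> ~ injective g.
Proof.
move=> n_lt /card_eq_inj[F F_inj F_lt] g_inj.
pose phi (s : S) : 'I_n := Ordinal (F_lt (g s) : (F (g s) < n)%N).
have : (#|S| <= #|'I_n|)%N by apply: (@leq_card _ _ phi) => s s' /(congr1 val) /F_inj /g_inj.
by rewrite card_ord leqNgt n_lt.
Qed.

Lemma card_eq_bijective T (S : finType) (g : S -> T) :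
  ([set: T] #= [set: S])%card -> injective g -> bijective g.
Proof.
move=> /card_eq_inj[F F_inj _] g_inj.
have /injF_bij[k kK Kk] : injective (F \o g) by move=> s s' /F_inj /g_inj.
by exists (k \o F) => [s | t]; [exact: kK | apply: F_inj; exact: Kk].
Qed.

Lemma dGH_eq_mdGH T (dT : metric R T) (S : finType) (dS : metric R S) :
  inhabited T -> regular_simplex dS ->
  (exists n : nat, (n < #|S|)%N /\ ([set: T] #= `I_n)%card)
    \/ ([set: T] #= [set: S])%card
    \/ (diam dS <= (2^-1)%:E * diam dT)%E ->
  dGH dT dS = mdGH dT dS.
Proof.
move=> iT [a side] cases; rewrite dGHE mdGHE; congr (_ * _)%E.
apply: gh_inf_eq_max => // f g δ fδ gδ.
have complete := gh_inf_le_of_completion side iT fδ.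
have side_le := simplex_side_le_dis side gδ.
case: cases => [[n [n_lt cardT]] | [cardT | hdiam]].
- by apply: complete; right; apply: side_le; exact: card_lt_not_injective cardT.
- have [g_inj|g_ninj] := pselect (injective g); last by apply: complete; right; exact: side_le.
  have [h gK hK] := card_eq_bijective cardT g_inj.
  have [hδ hgδ] := dis_codis_inverse gK hK gδ.
  exact: gh_inf_le hδ gδ hgδ.
- apply: complete; have [f_surj|f_nsurj] := pselect (forall s, exists x, f x = s).
    by left.
  by right; exact: (simplex_side_le_of_diam side iT hdiam fδ f_nsurj).
Qed.

Lemma finite_compact_metric (T : finType) (d : metric R T) : compact_metric d.
Proof.
move=> I U _ cover; exists #|T|, (fun j => proj1_sig (cid (cover (enum_val j)))).
by move=> x; exists (enum_rank x); rewrite enum_rankK; exact: proj2_sig (cid (cover x)).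
Qed.

Section SimplexMetric.
Variables (T : eqType) (a : R).
Hypothesis a_gt0 : 0 < a.

Definition simplex_dist (p q : T) : R := if p == q then 0 else a.

Lemma simplex_dist_eq0 p q : simplex_dist p q = 0 <-> p = q.
Proof.
rewrite /simplex_dist; case: eqP => // pq; split=> [a0|/pq] //.
by move: a_gt0; rewrite a0 ltxx.
Qed.

Lemma simplex_dist_sym p q : simplex_dist p q = simplex_dist q p.
Proof. by rewrite /simplex_dist eq_sym. Qed.

Lemma simplex_dist_tri p q r :
  simplex_dist p r <= simplex_dist p q + simplex_dist q r.
Proof.
rewrite /simplex_dist; have [<-|_] := eqVneq p q; first by rewrite add0r.
by case: ifP => _; case: ifP => _; move: a_gt0; lra.
Qed.

Definition simplex_metric : metric R T :=
  @Defs.Metric R T _ simplex_dist_eq0 simplex_dist_sym simplex_dist_tri.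

Lemma regular_simplex_metric : regular_simplex simplex_metric.
Proof. by exists a => p q /eqP/negbTE pq; rewrite /= /simplex_dist pq. Qed.

End SimplexMetric.

Section LineMetric.
Variable m : nat.

Definition line_dist (i j : 'I_m) : R := `|i%:R - j%:R|.

Lemma line_dist_eq0 i j : line_dist i j = 0 <-> i = j.
Proof.
split=> [/eqP|->]; last by rewrite /line_dist subrr normr0.
by rewrite normr_eq0 subr_eq0 eqr_nat => /eqP/ord_inj.
Qed.

Lemma line_dist_sym i j : line_dist i j = line_dist j i.
Proof. exact: distrC. Qed.

Lemma line_dist_tri i j k : line_dist i k <= line_dist i j + line_dist j k.
Proof. exact: ler_distD. Qed.

Definition line_metric : metric R 'I_m :=
  @Defs.Metric R _ _ line_dist_eq0 line_dist_sym line_dist_tri.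

End LineMetric.

Section LineVersusSimplex.
Variables (m : nat) (a : R).
Hypothesis a_gt0 : 0 < a.

Local Notation line := (line_metric m.+1).
Local Notation simplex := (@simplex_metric bool a a_gt0).

(* Either f separates two neighbours, which costs [|1 - a|] in distortion, or f
   is constant and the point it misses is at distance [a] from the whole image. *)
Lemma gh_inf_line_simplex_ge : ((a - 1)%:E <= gh_inf line simplex)%E.
Proof.
apply: le_ereal_inf_tmp => _ [[f g] _ <-] /=; rewrite !le_max.
have [[i i_lt fi]|adj] := pselect (exists2 i, (i < m)%N & f (inord i) != f (inord i.+1)).
  apply/orP; left; apply/orP; left; apply: le_trans (dis_ge f (inord i) (inord i.+1)).
  have [i_le i1_le] : (i < m.+1)%N /\ (i.+1 < m.+1)%N by rewrite !ltnS ltnW.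
  rewrite lee_fin /= /simplex_dist (negbTE fi) /line_dist !inordK //.
  rewrite -natr1 opprD addrA subrr sub0r normrN normr1 distrC; exact: ler_norm.
have f_const k : f k = f (inord 0).
  suff /(_ k (ltn_ord k)) : forall j, (j < m.+1)%N -> f (inord j) = f (inord 0).
    by rewrite inord_val.
  elim=> [//|j IH j_lt]; rewrite -IH ?(ltnW j_lt) //; apply/eqP; rewrite eq_sym.
  by apply: contraT => fj; case: adj; exists j.
apply/orP; right; apply: le_trans (codis_ge f g (g (~~ f (inord 0))) (~~ f (inord 0))).
rewrite lee_fin /= /simplex_dist /line_dist f_const subrr normr0.
by case: (f (inord 0)) => /=; rewrite sub0r normrN gtr0_norm //; lra.
Qed.

Lemma dis_inf_line_simplex_le : (dis_inf line simplex <= (m%:R)%:E)%E.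
Proof.
apply: le_trans (ereal_inf_lbound _) _; first by exists (fun=> true).
apply/dis_leP => i j; rewrite /= /simplex_dist eqxx subr0 /line_dist normr_id.
have i_le : (i%:R : R) <= m%:R by rewrite ler_nat -ltnS.
have j_le : (j%:R : R) <= m%:R by rewrite ler_nat -ltnS.
by rewrite ler_norml; apply/andP; split; have := ler0n R i; have := ler0n R j; lra.
Qed.

Lemma dis_inf_simplex_line_le : (dis_inf simplex line <= `|a - m%:R|%:E)%E.
Proof.
apply: le_trans (ereal_inf_lbound _) _.
  by exists (fun b : bool => if b then ord0 else ord_max).
apply/dis_leP => p q; rewrite /= /simplex_dist /line_dist.
by case: p; case: q; rewrite /= ?subrr ?normr0 ?sub0r ?subr0 ?normrN ?normr_nat ?normr0 ?normr_ge0.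
Qed.

End LineVersusSimplex.

Lemma dGH_mdGH_gap (c : R) : c < 2 ->
  exists (T : Type) (dT : metric R T) (S : finType) (dS : metric R S),
    [/\ compact_metric dT, inhabited T, inhabited S, regular_simplex dS
      & (c%:E * mdGH dT dS < dGH dT dS)%E].
Proof.
move=> c_lt2; have c2_gt0 : 0 < 2 - c by rewrite subr_gt0.
have [N N_big] : exists N : nat, 1 < (2 - c) * N.+1%:R.
  have x_ge0 : 0 <= (2 - c)^-1 by rewrite invr_ge0 ltW.
  exists (Num.Def.archi_bound (2 - c)^-1).
  rewrite -ltr_pdivrMl // mulr1 (lt_trans (archi_boundP x_ge0)) //.
  by rewrite ltr_nat.
have a_gt0 : 0 < 2 * N.+1%:R :> R by rewrite mulr_gt0 ?ltr0n.
pose L := line_metric N.+2; pose D := @simplex_metric bool _ a_gt0.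
exists 'I_N.+2, L, bool, D; split.
- exact: finite_compact_metric.
- by constructor; exact: ord0.
- by constructor; exact: true.
- exact: regular_simplex_metric.
rewrite dGHE mdGHE.
have gh_ge := gh_inf_line_simplex_ge N.+1 a_gt0.
have M_ge0 : (0 <= maxe (dis_inf L D) (dis_inf D L))%E.
  by rewrite le_max dis_inf_ge0 //; constructor; exact: ord0.
have M_le : (maxe (dis_inf L D) (dis_inf D L) <= N.+1%:R%:E)%E.
  have aN : `|2 * N.+1%:R - N.+1%:R| = N.+1%:R :> R.
    by rewrite (_ : 2 * _ - _ = N.+1%:R) ?normr_nat //; ring.
  by rewrite ge_max dis_inf_line_simplex_le -{1}aN dis_inf_simplex_line_le.
move: M_ge0 M_le; case: (maxe _ _) => [M| |] //; rewrite !lee_fin => M_ge0 M_le.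
have half_ge0 : (0 <= (2^-1 : R)%:E)%E by rewrite lee_fin invr_ge0 ler0n.
apply: lt_le_trans (lee_wpmul2l half_ge0 gh_ge).
have cM : c * M < 2 * N.+1%:R - 1.
  have [c_ge0|c_lt0] := lerP 0 c.
    by have := ler_wpM2l c_ge0 M_le; lra.
  by have := mulr_le0_ge0 (ltW c_lt0) M_ge0; have := ler0n R N; lra.
by rewrite muleA -!EFinM lte_fin mulrAC; lra.
Qed.

End GromovHausdorff.

Theorem theorem3 (R : realType) :
  (* (1) the bound *)
  (forall (T : Type) (dT : metric R T) (S : finType) (dS : metric R S),
     compact_metric dT -> inhabited T -> inhabited S -> regular_simplex dS ->
     (dGH dT dS <= 2%:E * mdGH dT dS)%E)
  /\
  (* (1) tightness *)
  (forall c : R, c < 2 ->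
     exists (T : Type) (dT : metric R T) (S : finType) (dS : metric R S),
       [/\ compact_metric dT, inhabited T, inhabited S, regular_simplex dS
         & (c%:E * mdGH dT dS < dGH dT dS)%E])
  /\
  (* (2) equality cases *)
  (forall (T : Type) (dT : metric R T) (S : finType) (dS : metric R S),
     compact_metric dT -> inhabited T -> inhabited S -> regular_simplex dS ->
     ((exists n : nat, (n < #|S|)%N /\ ([set: T] #= `I_n)%card)
      \/ ([set: T] #= [set: S])%card
      \/ (diam dS <= (2^-1)%:E * diam dT)%E) ->
     dGH dT dS = mdGH dT dS).
Proof.
split; first by move=> T dT S dS _ iT _; exact: dGH_le_2mdGH.
split; first exact: dGH_mdGH_gap.
by move=> T dT S dS _ iT _; exact: dGH_eq_mdGH.
Qed.
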